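(* $\mathbb{F}(V)^P=\mathbb{F}(a_0,\beta,\Delta)$.
   Context: Let $p>2$ be a prime, $q=p^n$, and $\mathbb{F}$ a field of characteristic $p$ containing $\mathbb{F}_q$. Let $\mathbb{F}(V)=\mathbb{F}(a_0,a_1,a_2)$. For $c\in\mathbb{F}_q$ let $\sigma_c$ act on $\mathbb{F}(a_0,a_1,a_2)$ by the field automorphism $a_2\mapsto a_2+2ca_1+c^2a_0$, $a_1\mapsto a_1+ca_0$, $a_0\mapsto a_0$, and let $P=\{\sigma_c:c\in\mathbb{F}_q\}$ (a group isomorphic to $(\mathbb{F}_q,+)$, the upper unitriangular matrices in $SL_2(\mathbb{F}_q)$). $\mathbb{F}(V)^P$ is the field of $P$-invariant rational functions. Define $\Delta=a_1^2-a_0a_2$ and $\beta=\prod_{c\in\mathbb{F}_q}(a_1+ca_0)$. *)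

From HB Require Import structures.
From mathcomp Require Import all_boot all_order all_algebra all_field.
From mathcomp Require Import fraction.
From mathcomp.multinomials Require Import mpoly.
Set Implicit Arguments. Unset Strict Implicit. Unset Printing Implicit Defensive.
Import GRing.Theory.
Local Open Scope ring_scope.

(* F(V) = {fraction {mpoly F[3]}}, with a0,a1,a2 = 'X_0,'X_1,'X_2. *)

Section Vars.
Variable F : fieldType.
Definition a0 : {mpoly F[3]} := 'X_(@inord 2 0).
Definition a1 : {mpoly F[3]} := 'X_(@inord 2 1).
Definition a2 : {mpoly F[3]} := 'X_(@inord 2 2).

Definition Delta : {mpoly F[3]} := a1 ^+ 2 - a0 * a2.

Definition sigma_poly (c : F) (p : {mpoly F[3]}) : {mpoly F[3]} :=
  comp_mpoly [tuple a0; a1 + c%:MP * a0;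
                    a2 + (2 * c)%:MP * a1 + (c ^+ 2)%:MP * a0] p.

Definition sigma (c : F) (x : {fraction {mpoly F[3]}}) : {fraction {mpoly F[3]}} :=
  let r := repr x in
  (tofrac (sigma_poly c (frac r).1)) / (tofrac (sigma_poly c (frac r).2)).

Definition in_gen_field (b0 b1 b2 : {mpoly F[3]}) (x : {fraction {mpoly F[3]}}) :=
  exists f g : {mpoly F[3]},
    comp_mpoly [tuple b0; b1; b2] g != 0 /\
    x = tofrac (comp_mpoly [tuple b0; b1; b2] f) /
        tofrac (comp_mpoly [tuple b0; b1; b2] g).
End Vars.

(* beta = prod_{c in F_q} (a1 + c a0), with F_q embedded in F via iota *)
Definition beta (K : finFieldType) (F : fieldType) (iota : {rmorphism K -> F})
  : {mpoly F[3]} := \prod_(c : K) (a1 F + (iota c)%:MP * a0 F).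

(* sigma_c fixes a0, Delta and beta = prod_c (a1 + c a0), so F(a0, beta, Delta) is
   invariant.  Conversely, a0, a1, Delta are algebraically independent and generate
   F(V) (a0 a2 = a1^2 - Delta), and in these coordinates sigma_c only translates a1
   by c a0.  Multiplying numerator and denominator by the conjugates of the
   denominator reduces to an invariant polynomial P.  Some a0^k P is a polynomial
   Q(a0, a1, Delta), and Q, as a polynomial in a1, is invariant under the q
   translations a1 -> a1 + c a0; Euclidean division by the monic orbit polynomial
   prod_c (X + c a0) then shows that Q is a polynomial in beta. *)

From HB Require Import structures.
From mathcomp Require Import all_boot all_order all_algebra all_field.
From mathcomp Require Import fraction generic_quotient.
From mathcomp.multinomials Require Import mpoly.
From mathcomp Require Import ring zify.
Set Implicit Arguments. Unset Strict Implicit. Unset Printing Implicit Defensive.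
Import GRing.Theory.
Local Open Scope ring_scope.

Section MMap.
Variables (n : nat) (R S : nzRingType).

Lemma eq_mmap (f1 f2 : R -> S) (h1 h2 : 'I_n -> S) p :
  f1 =1 f2 -> h1 =1 h2 -> mmap f1 h1 p = mmap f2 h2 p.
Proof.
move=> ef eh; rewrite /mmap; apply: eq_bigr => m _; rewrite ef.
by congr (_ * _); apply: mmap1_eq.
Qed.

Lemma rmorph_mmap (T : nzRingType) (g : {rmorphism S -> T}) (f : R -> S)
    (h : 'I_n -> S) p :
  g (mmap f h p) = mmap (g \o f) (g \o h) p.
Proof.
rewrite /mmap rmorph_sum; apply: eq_bigr => m _; rewrite rmorphM rmorph_prod.
by congr (_ * _); apply: eq_bigr => i _; rewrite rmorphXn.
Qed.

End MMap.

Lemma comp_mpolyA n k l (R : comNzRingType) (p : {mpoly R[n]})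
    (lq : n.-tuple {mpoly R[k]}) (lr : k.-tuple {mpoly R[l]}) :
  comp_mpoly lr (comp_mpoly lq p) = comp_mpoly (map_tuple (comp_mpoly lr) lq) p.
Proof.
rewrite {1}/comp_mpoly rmorph_mmap; apply: eq_mmap => [c|i] /=.
  exact: comp_mpolyC.
by rewrite tnth_map.
Qed.

Lemma mpoly_rmorph_ext n (R : comNzRingType) (S : nzRingType)
    (g1 g2 : {rmorphism {mpoly R[n]} -> S}) :
  (forall c, g1 c%:MP = g2 c%:MP) -> (forall i, g1 'X_i = g2 'X_i) -> g1 =1 g2.
Proof.
move=> eqC eqX p; rewrite -(comp_mpoly_id p) /comp_mpoly !rmorph_mmap.
by apply: eq_mmap => i /=; rewrite ?tnth_map ?tnth_ord_tuple.
Qed.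

Lemma ord3P (P : 'I_3 -> Prop) :
  P (inord 0) -> P (inord 1) -> P (inord 2) -> forall i, P i.
Proof.
move=> P0 P1 P2 [[|[|[|k]]] lt_i3] //.
- by rewrite (_ : Ordinal _ = inord 0) //; apply: val_inj; rewrite /= inordK.
- by rewrite (_ : Ordinal _ = inord 1) //; apply: val_inj; rewrite /= inordK.
- by rewrite (_ : Ordinal _ = inord 2) //; apply: val_inj; rewrite /= inordK.
Qed.

Lemma tnth3_0 (T : Type) (u0 u1 u2 : T) : tnth [tuple u0; u1; u2] (inord 0) = u0.
Proof. by rewrite (tnth_nth u0) inordK. Qed.
Lemma tnth3_1 (T : Type) (u0 u1 u2 : T) : tnth [tuple u0; u1; u2] (inord 1) = u1.
Proof. by rewrite (tnth_nth u0) inordK. Qed.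
Lemma tnth3_2 (T : Type) (u0 u1 u2 : T) : tnth [tuple u0; u1; u2] (inord 2) = u2.
Proof. by rewrite (tnth_nth u0) inordK. Qed.

Definition tnth3E := (tnth3_0, tnth3_1, tnth3_2).

Section ThreeVariables.
Variable F : fieldType.
Local Notation R := {mpoly F[3]}.
Implicit Types p : R.

Lemma comp_mpoly3_a0 (u0 u1 u2 : R) : comp_mpoly [tuple u0; u1; u2] (a0 F) = u0.
Proof. by rewrite comp_mpolyXU -tnth_nth tnth3_0. Qed.
Lemma comp_mpoly3_a1 (u0 u1 u2 : R) : comp_mpoly [tuple u0; u1; u2] (a1 F) = u1.
Proof. by rewrite comp_mpolyXU -tnth_nth tnth3_1. Qed.
Lemma comp_mpoly3_a2 (u0 u1 u2 : R) : comp_mpoly [tuple u0; u1; u2] (a2 F) = u2.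
Proof. by rewrite comp_mpolyXU -tnth_nth tnth3_2. Qed.

Definition comp_mpoly3E := (comp_mpoly3_a0, comp_mpoly3_a1, comp_mpoly3_a2).

Lemma comp_mpoly3A (t : 3.-tuple R) (u0 u1 u2 : R) p :
  comp_mpoly t (comp_mpoly [tuple u0; u1; u2] p) =
  comp_mpoly [tuple comp_mpoly t u0; comp_mpoly t u1; comp_mpoly t u2] p.
Proof. by rewrite comp_mpolyA; congr comp_mpoly; apply: val_inj. Qed.

Lemma mpoly3_rmorph_ext (S : nzRingType) (g1 g2 : {rmorphism R -> S}) :
    (forall c, g1 c%:MP = g2 c%:MP) ->
    g1 (a0 F) = g2 (a0 F) -> g1 (a1 F) = g2 (a1 F) -> g1 (a2 F) = g2 (a2 F) ->
  g1 =1 g2.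
Proof. by move=> eqC eq0 eq1 eq2; apply: mpoly_rmorph_ext => //; apply: ord3P. Qed.

Lemma comp_mpoly3_id p : comp_mpoly [tuple a0 F; a1 F; a2 F] p = p.
Proof.
by apply: (mpoly3_rmorph_ext (g2 := idfun)) => [c|||]; rewrite /= ?comp_mpolyC ?comp_mpoly3E.
Qed.

Lemma a0_neq0 : a0 F != 0.
Proof.
apply/eqP => /(congr1 (mcoeff U_(inord 0))).
by rewrite mcoeffX eqxx mcoeff0 => /eqP; rewrite oner_eq0.
Qed.

End ThreeVariables.

Section Action.
Variable F : fieldType.
Local Notation R := {mpoly F[3]}.
Local Notation A0 := (a0 F).
Local Notation A1 := (a1 F).
Local Notation A2 := (a2 F).
Implicit Types (c d : F) (p : R).

HB.instance Definition _ c := GRing.RMorphism.copy (sigma_poly c)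
  (comp_mpoly [tuple A0; A1 + c%:MP * A0; A2 + (2 * c)%:MP * A1 + (c ^+ 2)%:MP * A0]).

Lemma sigma_poly_a0 c : sigma_poly c A0 = A0.
Proof. exact: comp_mpoly3_a0. Qed.
Lemma sigma_poly_a1 c : sigma_poly c A1 = A1 + c%:MP * A0.
Proof. exact: comp_mpoly3_a1. Qed.
Lemma sigma_poly_a2 c : sigma_poly c A2 = A2 + (2 * c)%:MP * A1 + (c ^+ 2)%:MP * A0.
Proof. exact: comp_mpoly3_a2. Qed.
Lemma sigma_polyC c (k : F) : sigma_poly c k%:MP = k%:MP.
Proof. exact: comp_mpolyC. Qed.

Definition sigma_polyE := (sigma_poly_a0, sigma_poly_a1, sigma_poly_a2, sigma_polyC).

Lemma sigma_polyD c d p : sigma_poly c (sigma_poly d p) = sigma_poly (c + d) p.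
Proof.
rewrite /sigma_poly comp_mpoly3A; congr comp_mpoly; apply: val_inj => /=.
rewrite !rmorphD !rmorphM /= !comp_mpolyC !comp_mpoly3E rmorphD /=.
by congr [:: _; _; _]; ring.
Qed.

Lemma sigma_poly0 p : sigma_poly 0 p = p.
Proof.
rewrite /sigma_poly mulr0 expr0n /= !(rmorph0, mul0r, addr0).
exact: comp_mpoly3_id.
Qed.

Lemma sigma_polyK c : cancel (sigma_poly c) (sigma_poly (- c)).
Proof. by move=> p; rewrite sigma_polyD addNr sigma_poly0. Qed.

Lemma sigma_poly_eq0 c p : (sigma_poly c p == 0) = (p == 0).
Proof.
apply/eqP/eqP => [/(congr1 (sigma_poly (- c)))|->]; last exact: rmorph0.
by rewrite sigma_polyK rmorph0.
Qed.

Lemma sigma_poly_Delta c : sigma_poly c (Delta F) = Delta F.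
Proof.
by rewrite /Delta rmorphB rmorphXn rmorphM /= !sigma_polyE !rmorphM /=; ring.
Qed.

End Action.

Lemma frac_repr (R : idomainType) (x : {fraction R}) :
  x = tofrac (frac (repr x)).1 / tofrac (frac (repr x)).2.
Proof.
rewrite -[x in LHS]reprK; set r := repr x; have r2_neq0 := denom_ratioP r.
apply: (@mulIf _ (tofrac (frac r).2)); first by rewrite tofrac_eq0.
rewrite divfK ?tofrac_eq0 //; unlock tofrac.
have -> (a b : {ratio R}) : (\pi_({fraction R}) a)%qT * (\pi_({fraction R}) b)%qT =
    (\pi_({fraction R}) (FracField.mulf a b))%qT by rewrite FracField.pi_mul.
apply/eqmodP; rewrite /= FracField.equivfE /FracField.mulf /=.
by rewrite !numden_Ratio ?oner_neq0 ?mulf_neq0 ?oner_neq0 // !mulr1 mulrC.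
Qed.

Lemma sigma_frac (F : fieldType) (c : F) (u v : {mpoly F[3]}) : v != 0 ->
  sigma c (tofrac u / tofrac v) = tofrac (sigma_poly c u) / tofrac (sigma_poly c v).
Proof.
move=> v_neq0; rewrite /sigma; set r := repr _; have r2_neq0 := denom_ratioP r.
have /eqP := frac_repr (tofrac u / tofrac v); rewrite -/r.
rewrite eqr_div ?tofrac_eq0 // -!rmorphM tofrac_eq => /eqP eq_uv.
apply/eqP; rewrite eqr_div ?tofrac_eq0 ?sigma_poly_eq0 // -!rmorphM tofrac_eq.
by rewrite eq_uv.
Qed.

Section Invariants.
Variables (K : finFieldType) (F : fieldType) (iota : {rmorphism K -> F}).
Local Notation Psi := (comp_mpoly [tuple a0 F; beta iota; Delta F]).

Lemma sigma_poly_beta (c : K) : sigma_poly (iota c) (beta iota) = beta iota.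
Proof.
rewrite rmorph_prod [RHS](reindex_inj (addrI c)) /=; apply: eq_bigr => d _.
by rewrite rmorphD rmorphM /= !sigma_polyE rmorphD /=; ring.
Qed.

Lemma sigma_poly_Psi (c : K) f : sigma_poly (iota c) (Psi f) = Psi f.
Proof.
by rewrite /sigma_poly comp_mpoly3A -!/(sigma_poly _ _) sigma_poly_a0
  sigma_poly_beta sigma_poly_Delta.
Qed.

Lemma sigma_in_gen_field x :
  in_gen_field (a0 F) (beta iota) (Delta F) x -> forall c : K, sigma (iota c) x = x.
Proof. by case=> f [g [g_neq0 ->]] c; rewrite sigma_frac // !sigma_poly_Psi. Qed.

End Invariants.

Section TranslationInvariants.
Variables (S : idomainType) (K : finZmodType) (t : K -> S).
Hypotheses (t_inj : injective t) (tD : {morph t : c d / c + d}).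
Local Notation shift c := ('X + (t c)%:P).
Local Notation U := (\prod_(c : K) shift c).

Let card_K_gt0 : (0 < #|K|)%N.
Proof. by apply/card_gt0P; exists 0. Qed.

Lemma monic_orbit_poly : U \is monic.
Proof. by apply: monic_prod => c _; apply: monicXaddC. Qed.

Lemma size_orbit_poly : size U = #|K|.+1.
Proof.
rewrite (eq_bigr (fun c => 'X - (- t c)%:P)) => [|c _]; last by rewrite polyCN opprK.
by rewrite size_prod_XsubC cardT enumT.
Qed.

Lemma orbit_poly_shift c : U \Po shift c = U.
Proof.
rewrite rmorph_prod /= [RHS](reindex_inj (addrI c)) /=; apply: eq_bigr => d _.
by rewrite comp_polyD comp_polyX comp_polyC tD polyCD addrA.
Qed.

Lemma shift_invariant_small (G : {poly S}) :
  (forall c, G \Po shift c = G) -> (size G < size U)%N -> G = (G.[0])%:P.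
Proof.
move=> G_inv small_G; apply/eqP; rewrite -subr_eq0; apply: contraLR small_G => nz.
have roots_t : all (root (G - (G.[0])%:P)) [seq t c | c <- enum K].
  apply/allP => _ /mapP [c _ ->]; rewrite rootE !hornerE subr_eq0.
  by rewrite -{2}(G_inv c) horner_comp !hornerE.
have uniq_t : uniq [seq t c | c <- enum K] by rewrite map_inj_uniq ?enum_uniq.
have := max_poly_roots nz roots_t uniq_t.
rewrite size_map -cardE -leqNgt size_orbit_poly.
have := size_polyD G (- (G.[0])%:P); rewrite size_polyN size_polyC.
move: card_K_gt0; case: (G.[0] != 0);
  by move: (size G) (size (G - _)) #|K| => a b k /=; lia.
Qed.

Let lead_coef_orbit_unit : lead_coef U \is a GRing.unit.
Proof. by rewrite (monicP monic_orbit_poly) unitr1. Qed.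

Lemma shift_invariant_divp_modp (G : {poly S}) c : G \Po shift c = G ->
  (G %/ U) \Po shift c = G %/ U /\ (G %% U) \Po shift c = G %% U.
Proof.
move=> G_inv; apply: (Pdiv.IdomainUnit.edivpP lead_coef_orbit_unit).
  rewrite -[X in _ * X](orbit_poly_shift c) -comp_polyM -comp_polyD.
  by rewrite -Pdiv.IdomainUnit.divp_eq // G_inv.
have := ltn_modp G U; rewrite monic_neq0 ?monic_orbit_poly // => lt_mod.
by rewrite size_comp_poly2 // size_XaddC.
Qed.

Lemma shift_invariant_comp_orbit (G : {poly S}) :
  (forall c, G \Po shift c = G) -> exists H : {poly S}, G = H \Po U.
Proof.
elim: {G}(size G) {-2}G (leqnn (size G)) => [|k IHk] G le_Gk G_inv.
  by exists 0; move: le_Gk; rewrite size_poly_leq0 comp_poly0 => /eqP.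
have [div_inv mod_inv] := all_and2 (fun c => shift_invariant_divp_modp (G_inv c)).
have U_neq0 : U != 0 by rewrite monic_neq0 ?monic_orbit_poly.
have /shift_invariant_small mod_const := mod_inv.
rewrite ltn_modp U_neq0 in mod_const.
have [H eq_div] : exists H, G %/ U = H \Po U.
  apply: IHk div_inv; rewrite size_divp // size_orbit_poly /=.
  by move: le_Gk card_K_gt0; move: (size G) #|K| => m n; lia.
exists (H * 'X + ((G %% U).[0])%:P).
rewrite comp_polyD comp_polyM comp_polyX comp_polyC -eq_div -mod_const //.
exact: Pdiv.IdomainUnit.divp_eq.
Qed.
End TranslationInvariants.

Section Localization.
Variable F : fieldType.
Local Notation R := {mpoly F[3]}.
Local Notation A0 := (a0 F).
Local Notation A1 := (a1 F).
Local Notation A2 := (a2 F).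
Local Notation Phi := (comp_mpoly [tuple A0; A1; Delta F]).

Lemma Phi_inj : injective Phi.
Proof.
(* In the fraction field a2 = (a1^2 - Delta) / a0, which gives a left inverse. *)
pose ev := mmap (@tofrac R \o @mpolyC 3 F)
  (tnth [tuple tofrac A0; tofrac A1; (tofrac A1 ^+ 2 - tofrac A2) / tofrac A0]).
suff evPhi : ev \o Phi =1 @tofrac R.
  by move=> p q eq_pq; apply/eqP; rewrite -tofrac_eq -!evPhi /= eq_pq.
have A0_neq0 : tofrac A0 != 0 by rewrite tofrac_eq0 a0_neq0.
apply: mpoly3_rmorph_ext => [c|||];
  rewrite /= ?comp_mpolyC ?comp_mpoly3E ?mmapC ?mmapX ?mmap1U ?tnth3E //.
rewrite /Delta rmorphB rmorphXn rmorphM /= !mmapX !mmap1U !tnth3E.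
by rewrite mulrC divfK // opprB addrC subrK.
Qed.

Lemma Phi_localization P : exists k Q, Phi Q = A0 ^+ k * P.
Proof.
pose loc P := exists k Q, Phi Q = A0 ^+ k * P.
have locC c : loc c%:MP by exists 0%N, c%:MP; rewrite comp_mpolyC mul1r.
have locD : forall P1 P2, loc P1 -> loc P2 -> loc (P1 + P2).
  move=> P1 P2 [k [Q1 eQ1]] [j [Q2 eQ2]]; exists (k + j)%N, (A0 ^+ j * Q1 + A0 ^+ k * Q2).
  by rewrite rmorphD !rmorphM !rmorphXn /= comp_mpoly3_a0 eQ1 eQ2 exprD; ring.
have locM : forall P1 P2, loc P1 -> loc P2 -> loc (P1 * P2).
  move=> P1 P2 [k [Q1 eQ1]] [j [Q2 eQ2]]; exists (k + j)%N, (Q1 * Q2).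
  by rewrite rmorphM /= eQ1 eQ2 exprD; ring.
have locX i : loc 'X_i.
  move: i; apply: ord3P.
  - by exists 0%N, A0; rewrite comp_mpoly3_a0 mul1r.
  - by exists 0%N, A1; rewrite comp_mpoly3_a1 mul1r.
  (* a0 a2 = a1^2 - Delta *)
  exists 1%N, (A1 ^+ 2 - A2).
  by rewrite rmorphB rmorphXn /= comp_mpoly3_a1 comp_mpoly3_a2 /Delta /a2; ring.
rewrite [P]mpolyE; apply: (big_ind loc) => [||m _]; first by rewrite -mpolyC0.
  exact: locD.
rewrite -mul_mpolyC mpolyXE_id; apply: (locM) => //.
apply: (big_ind loc) => [||i _]; first by rewrite -mpolyC1.
  exact: locM.
elim: (m i) => [|e IHe]; first by rewrite expr0 -mpolyC1.
by rewrite exprS; apply: (locM).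
Qed.
End Localization.

Section PolyInA1.
Variable F : fieldType.
Local Notation R := {mpoly F[3]}.
Local Notation A0 := (a0 F).
Local Notation A1 := (a1 F).
Local Notation A2 := (a2 F).
Local Notation zeta := (comp_mpoly [tuple A0; 0; A2]).

Definition poly_a1 (p : R) : {poly R} :=
  mmap (polyC \o @mpolyC 3 F) (tnth [tuple A0%:P; 'X; A2%:P]) p.

HB.instance Definition _ := GRing.RMorphism.copy poly_a1
  (mmap (polyC \o @mpolyC 3 F) (tnth [tuple A0%:P; 'X; A2%:P])).

Lemma poly_a1C c : poly_a1 c%:MP = (c%:MP)%:P. Proof. exact: mmapC. Qed.
Lemma poly_a1_a0 : poly_a1 A0 = A0%:P. Proof. by rewrite /poly_a1 mmapX mmap1U tnth3E. Qed.
Lemma poly_a1_a1 : poly_a1 A1 = 'X. Proof. by rewrite /poly_a1 mmapX mmap1U tnth3E. Qed.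
Lemma poly_a1_a2 : poly_a1 A2 = A2%:P. Proof. by rewrite /poly_a1 mmapX mmap1U tnth3E. Qed.

Definition poly_a1E := (poly_a1C, poly_a1_a0, poly_a1_a1, poly_a1_a2).

Lemma horner_poly_a1 p : (poly_a1 p).[A1] = p.
Proof.
apply: (mpoly3_rmorph_ext (g1 := horner_eval A1 \o poly_a1) (g2 := idfun)) => [c|||];
  by rewrite /= poly_a1E horner_evalE ?hornerC ?hornerX.
Qed.

Lemma map_poly_zeta_poly_a1 p : map_poly zeta (poly_a1 p) = poly_a1 p.
Proof.
apply: (mpoly3_rmorph_ext (g1 := map_poly zeta \o poly_a1)) => [c|||];
  by rewrite /= poly_a1E ?map_polyC ?map_polyX /= ?comp_mpolyC ?comp_mpoly3E.
Qed.

Lemma comp_mpoly_zeta u p : comp_mpoly [tuple A0; u; A2] (zeta p) = zeta p.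
Proof. by rewrite comp_mpoly3A !comp_mpoly3E rmorph0. Qed.

End PolyInA1.

Section InvariantPolynomials.
Variables (K : finFieldType) (F : fieldType) (iota : {rmorphism K -> F}).
Local Notation R := {mpoly F[3]}.
Local Notation A0 := (a0 F).
Local Notation A1 := (a1 F).
Local Notation A2 := (a2 F).
Local Notation Phi := (comp_mpoly [tuple A0; A1; Delta F]).
Local Notation Psi := (comp_mpoly [tuple A0; beta iota; Delta F]).
Local Notation zeta := (comp_mpoly [tuple A0; 0; A2]).

(* sigma_c in the coordinates (a0, a1, Delta), see Phi_tau. *)
Definition tau (c : F) : R -> R := comp_mpoly [tuple A0; A1 + c%:MP * A0; A2].

Lemma Phi_tau c Q : Phi (tau c Q) = sigma_poly c (Phi Q).
Proof.
apply: (mpoly3_rmorph_ext (g1 := Phi \o tau c) (g2 := sigma_poly c \o Phi)) => [d|||];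
  rewrite /= ?comp_mpolyC ?comp_mpoly3E ?sigma_polyE ?sigma_poly_Delta //.
by rewrite rmorphD rmorphM /= comp_mpolyC !comp_mpoly3E.
Qed.

Lemma poly_a1_tau c Q : poly_a1 (tau c Q) = poly_a1 Q \Po ('X + (c%:MP * A0)%:P).
Proof.
apply: (mpoly3_rmorph_ext (g1 := poly_a1 (F := F) \o tau c)
  (g2 := comp_poly ('X + (c%:MP * A0)%:P) \o poly_a1 (F := F))) => [d|||];
  rewrite /= ?comp_mpolyC ?comp_mpoly3E poly_a1E ?comp_polyC ?comp_polyX //.
by rewrite rmorphD rmorphM /= !poly_a1E polyCM.
Qed.

Lemma Phi_beta : Phi (beta iota) = beta iota.
Proof.
rewrite rmorph_prod; apply: eq_bigr => c _.
by rewrite rmorphD rmorphM /= comp_mpolyC !comp_mpoly3E.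
Qed.

Let shift_a0 (c : K) : R := (iota c)%:MP * A0.

Let shift_a0_inj : injective shift_a0.
Proof.
move=> c d /(mulIf (a0_neq0 F)) /eqP; rewrite mpolyC_eq => /eqP; exact: fmorph_inj.
Qed.

Let shift_a0D : {morph shift_a0 : c d / c + d}.
Proof. by move=> c d; rewrite /shift_a0 !rmorphD mulrDl. Qed.

Lemma invariant_poly_a0_multiple P :
    (forall c : K, sigma_poly (iota c) P = P) ->
  exists k f, A0 ^+ k * P = Psi f.
Proof.
move=> P_inv; have [k [Q eQ]] := Phi_localization P.
have tau_inv c : tau (iota c) Q = Q.
  by apply: Phi_inj; rewrite Phi_tau eQ rmorphM rmorphXn /= P_inv sigma_poly_a0.
have [H eH] : exists H, poly_a1 Q = H \Po \prod_(c : K) ('X + (shift_a0 c)%:P).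
  apply: (shift_invariant_comp_orbit shift_a0_inj shift_a0D) => c.
  by rewrite -poly_a1_tau tau_inv.
have orbit_a1 : (\prod_(c : K) ('X + (shift_a0 c)%:P)).[A1] = beta iota.
  by rewrite horner_prod; apply: eq_bigr => c _; rewrite hornerD hornerX hornerC.
(* The coefficients of H may involve a1; zeta removes it without changing poly_a1 Q. *)
pose H' := map_poly zeta H.
have eQH' : Q = H'.[beta iota].
  rewrite -[Q]horner_poly_a1 -map_poly_zeta_poly_a1 eH map_comp_poly horner_comp.
  rewrite -orbit_a1 rmorph_prod; congr (_.[_.[_]]); apply: eq_bigr => c _.
  rewrite rmorphD /= map_polyX map_polyC; congr (_ + _%:P).
  by rewrite /shift_a0 /= rmorphM /= comp_mpolyC comp_mpoly3E.
have H'_beta : comp_mpoly [tuple A0; beta iota; A2] H'.[A1] = H'.[beta iota].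
  rewrite -horner_map /= comp_mpoly3E -map_poly_comp.
  by congr horner; apply: eq_map_poly => x /=; rewrite comp_mpoly_zeta.
exists k, H'.[A1]; rewrite -eQ eQH' -H'_beta comp_mpoly3A !comp_mpoly3E.
by rewrite Phi_beta.
Qed.

End InvariantPolynomials.

Section InvariantFractions.
Variables (K : finFieldType) (F : fieldType) (iota : {rmorphism K -> F}).
Local Notation R := {mpoly F[3]}.

Lemma frac_invariant_denominator (x : {fraction R}) : exists u v : R,
  [/\ v != 0, forall c : K, sigma_poly (iota c) v = v & x = tofrac u / tofrac v].
Proof.
set N := (frac (repr x)).1; set D := (frac (repr x)).2.
have D_neq0 : D != 0 := denom_ratioP _.
pose D' := \prod_(d | d != 0) sigma_poly (iota d) D.
have D'_neq0 : D' != 0 by apply/prodf_neq0 => d _; rewrite sigma_poly_eq0.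
have orbit_D : \prod_(d : K) sigma_poly (iota d) D = D * D'.
  by rewrite (bigD1 0) //= rmorph0 sigma_poly0.
exists (N * D'), (D * D'); split.
- by rewrite mulf_neq0.
- move=> c; rewrite -orbit_D rmorph_prod [RHS](reindex_inj (addrI c)) /=.
  by apply: eq_bigr => d _; rewrite sigma_polyD rmorphD.
- by rewrite [LHS]frac_repr !rmorphM /= -mulf_div divff ?mulr1 // tofrac_eq0.
Qed.

Lemma invariant_frac_numerator (u v : R) : v != 0 ->
    (forall c : K, sigma_poly (iota c) v = v) ->
    (forall c : K, sigma (iota c) (tofrac u / tofrac v) = tofrac u / tofrac v) ->
  forall c : K, sigma_poly (iota c) u = u.
Proof.
move=> v_neq0 v_inv x_inv c; have := x_inv c; rewrite sigma_frac // v_inv.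
have vV_neq0 : (tofrac v)^-1 != 0 by rewrite invr_eq0 tofrac_eq0.
by move/(mulIf vV_neq0)/eqP; rewrite tofrac_eq => /eqP.
Qed.

End InvariantFractions.

Theorem lemma2p3 (p n : nat) (K : finFieldType) (F : fieldType)
  (iota : {rmorphism K -> F}) :
  prime p -> (2 < p)%N -> (0 < n)%N -> #|K| = (p ^ n)%N ->
  forall x : {fraction {mpoly F[3]}},
    (forall c : K, sigma (iota c) x = x) <->
    in_gen_field (a0 F) (beta iota) (Delta F) x.
Proof.
move=> _ _ _ _ x; split; last exact: sigma_in_gen_field.
move=> x_inv; have [u [v [v_neq0 v_inv ex]]] := frac_invariant_denominator iota x.
rewrite {}ex in x_inv *.
have u_inv := invariant_frac_numerator v_neq0 v_inv x_inv.
have [k [f ef]] := invariant_poly_a0_multiple u_inv.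
have [j [h eh]] := invariant_poly_a0_multiple v_inv.
have a0X_neq0 i : a0 F ^+ i != 0 by rewrite expf_neq0 // a0_neq0.
have Psi_a0X i g : comp_mpoly [tuple a0 F; beta iota; Delta F] (a0 F ^+ i * g) =
    a0 F ^+ i * comp_mpoly [tuple a0 F; beta iota; Delta F] g.
  by rewrite rmorphM rmorphXn /= comp_mpoly3_a0.
exists (a0 F ^+ j * f), (a0 F ^+ k * h); rewrite !Psi_a0X -ef -eh.
split; first by rewrite !mulf_neq0.
apply/eqP; rewrite eqr_div ?tofrac_eq0 ?mulf_neq0 // -!rmorphM tofrac_eq.
by apply/eqP; ring.
Qed.
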